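(* Let $l\ge2$ be an integer and $\varepsilon>0$. Then, as $n\to\infty$, $$\sum_{1\le i\le n}\ \sum_{\substack{d_1,d_2\ge1,\ d_1d_2\le i\\ d_1\mid i,\ d_2\mid i+1\\ \gcd(d_1,d_2)=1}}\frac{\mu(d_1)\mu(d_2)}{(d_1d_2)^{l-1}}=n\prod_p\Big(1-\frac{2}{p^l}\Big)+O_{l,\varepsilon}(n^{\varepsilon}),$$ where $\mu$ is the Möbius function and $p$ runs over all primes. *)

From HB Require Import structures.
From mathcomp Require Import all_boot all_order all_algebra.
From mathcomp Require Import all_classical all_reals all_analysis.
Set Implicit Arguments. Unset Strict Implicit. Unset Printing Implicit Defensive.
Import Order.TTheory GRing.Theory Num.Theory.
Local Open Scope ring_scope.

(* Moebius function: mu 0 = 0 (never used), mu n = (-1)^(#primes of n) if n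
   is squarefree, 0 otherwise. *)
Definition moebius (n : nat) : int :=
  if (0 < n)%N && all (fun p => logn p n == 1%N) (primes n)
  then (-1) ^+ size (primes n) else 0.

Definition S29 (R : realType) (l n : nat) : R :=
  \sum_(1 <= i < n.+1)
    \sum_(1 <= d1 < i.+1 | (d1 %| i)%N)
      \sum_(1 <= d2 < i.+2 | [&& (d2 %| i.+1)%N, coprime d1 d2 & (d1 * d2 <= i)%N])
        ((moebius d1 * moebius d2)%:~R / ((d1 * d2)%:R ^+ (l - 1))).

Definition euler_partial (R : realType) (l N : nat) : R :=
  \prod_(p < N | prime p) (1 - 2 / (p%:R ^+ l)).

From HB Require Import structures.
From mathcomp Require Import all_boot all_order all_algebra.
From mathcomp Require Import all_classical all_reals all_analysis.
From mathcomp Require Import ring lra zify.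
Set Implicit Arguments. Unset Strict Implicit. Unset Printing Implicit Defensive.
Import Order.TTheory GRing.Theory Num.Theory.
Import numFieldNormedType.Exports.
Local Open Scope ring_scope.
Local Open Scope classical_set_scope.

(* Exchanging the order of summation, S29 n is the sum over x, y <= n of
   mu(x) mu(y) / (x y)^(l-1) times the number of i <= n with x | i, y | i + 1
   and x y <= i.  For coprime x, y these i form, by the Chinese remainder
   theorem, one residue class mod x y in [x y, n], so the count is
   n / (x y) + O(1).  The main term is n times a partial sum T of the double
   series of mu(x) mu(y) / (x y)^l over coprime pairs, whose tails are
   O(1/N) because l >= 2; the error is O((sum_{x <= n} 1/x)^2) = O(n^eps).
   Expanding the Euler product over the squarefree numbers built from the
   primes below N shows that it is within O(1/N) of T(N), so both converge to
   the same limit P. *)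

Lemma moebius1 : moebius 1 = 1.
Proof. by []. Qed.

Lemma moebius_primeM p d : prime p -> ~~ (p %| d)%N -> (0 < d)%N ->
  moebius (p * d) = - moebius d.
Proof.
move=> p_pr p_ndvd d_gt0.
have p_gt0 := prime_gt0 p_pr.
have p_nprimes : p \notin primes d by rewrite mem_primes p_pr d_gt0.
have primes_pd : perm_eq (primes (p * d)) (p :: primes d).
  apply: uniq_perm; rewrite ?primes_uniq //= ?p_nprimes ?primes_uniq // => q.
  by rewrite primesM // in_cons primes_prime // mem_seq1.
have lognd_p : logn p d = 0%N by apply/eqP; rewrite -leqn0 leqNgt logn_gt0.
have sqf_pd : all (fun q => logn q (p * d) == 1%N) (primes (p * d)) =
              all (fun q => logn q d == 1%N) (primes d).
  rewrite (perm_all _ primes_pd) /= lognM // logn_prime // eqxx lognd_p /=.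
  apply: eq_in_all => q q_d; rewrite lognM // logn_prime //.
  by case: (q =P p) q_d => [->|//]; rewrite (negbTE p_nprimes).
rewrite /moebius muln_gt0 p_gt0 d_gt0 sqf_pd (perm_size primes_pd) /= exprS.
by case: ifP; rewrite ?mulN1r ?oppr0.
Qed.

Lemma moebius_sqr_dvd p d : prime p -> (p ^ 2 %| d)%N -> moebius d = 0.
Proof.
move=> p_pr p2_d; rewrite /moebius.
have [->|d_gt0] := posnP d; first by [].
have p_d : p \in primes d.
  by rewrite mem_primes p_pr d_gt0 (dvdn_trans (dvdn_exp2l p (isT : 1 <= 2)%N)).
have : (2 <= logn p d)%N by rewrite -pfactor_dvdn.
by case: allP => // /(_ _ p_d) /eqP ->.
Qed.

Lemma norm_moebius_le1 (R : numDomainType) d : `|(moebius d)%:~R : R| <= 1.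
Proof.
rewrite /moebius; case: ifP => _; last by rewrite normr0.
by rewrite rmorphXn /= normrX normrN normr1 expr1n.
Qed.

(* For distinct primes [ps], the squarefree numbers whose prime factors all
   lie in [ps]. *)
Definition subprods (ps : seq nat) : seq nat :=
  foldr (fun p s => s ++ map (muln p) s) [:: 1%N] ps.

Lemma subprods_gt0 ps x : all prime ps -> x \in subprods ps -> (0 < x)%N.
Proof.
elim: ps x => [|p ps IH] x /=; first by rewrite mem_seq1 => _ /eqP ->.
case/andP=> p_pr ps_pr; rewrite mem_cat => /orP[/IH-> //|/mapP[y /IH y_gt0 ->]].
by rewrite muln_gt0 prime_gt0 ?y_gt0.
Qed.

Lemma subprods_ndvd ps p x : prime p -> p \notin ps -> all prime ps ->
  x \in subprods ps -> ~~ (p %| x)%N.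
Proof.
move=> p_pr; elim: ps x => [|q ps IH] x /=.
  by rewrite mem_seq1 => _ _ /eqP ->; rewrite dvdn1; case: eqP p_pr => // ->.
rewrite in_cons negb_or => /andP[p_neq_q p_ps] /andP[q_pr ps_pr].
rewrite mem_cat => /orP[/IH -> //|/mapP[y y_ps ->]].
by rewrite Euclid_dvdM // negb_or dvdn_prime2 // p_neq_q IH.
Qed.

Lemma subprods_uniq ps : uniq ps -> all prime ps -> uniq (subprods ps).
Proof.
elim: ps => [|p ps IH] //= /andP[p_ps ps_uniq] /andP[p_pr ps_pr].
rewrite cat_uniq IH // map_inj_in_uniq ?IH //; last first.
  by move=> x y _ _ /eqP; rewrite eqn_pmul2l ?prime_gt0 // => /eqP.
rewrite andbT; apply/hasPn => _ /mapP[y y_ps ->].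
by apply/negP => /(subprods_ndvd p_pr p_ps ps_pr); rewrite dvdn_mulr.
Qed.

Lemma mem_subprods ps d : all prime ps -> (0 < d)%N -> moebius d != 0 ->
  {subset primes d <= ps} -> d \in subprods ps.
Proof.
elim: ps d => [|p ps IH] d /=.
  move=> _ d_gt0 _ d_primes; rewrite mem_seq1; apply/negPn/negP => d_neq1.
  have d_gt1 : (1 < d)%N by rewrite ltn_neqAle eq_sym d_neq1.
  by have := d_primes (pdiv d); rewrite mem_primes pdiv_prime // d_gt0 pdiv_dvd => /(_ isT).
case/andP=> p_pr ps_pr d_gt0 mu_d d_primes; rewrite mem_cat.
have [p_d|p_nd] := boolP (p %| d)%N; last first.
  apply/orP; left; apply: IH => // q q_d; have := d_primes q q_d.
  rewrite in_cons => /predU1P[q_p|//].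
  by move: q_d; rewrite q_p mem_primes (negbTE p_nd) !andbF.
have d_eq : d = (p * (d %/ p))%N by rewrite mulnC (divnK p_d).
have e_gt0 : (0 < d %/ p)%N by rewrite divn_gt0 ?prime_gt0 // dvdn_leq.
have p_ne : ~~ (p %| d %/ p)%N.
  apply: contra mu_d => p_e; apply/eqP/(moebius_sqr_dvd p_pr).
  by rewrite d_eq expnS expn1 dvdn_pmul2l ?prime_gt0.
apply/orP; right; apply/mapP; exists (d %/ p)%N => //; apply: IH => //.
  by move: mu_d; rewrite {1}d_eq moebius_primeM // oppr_eq0.
move=> q; rewrite mem_primes => /and3P[q_pr _ q_e].
have q_d : q \in primes d by rewrite mem_primes q_pr d_gt0 (dvdn_trans q_e (dvdn_div p_d)).
have := d_primes q q_d; rewrite in_cons => /predU1P[q_p|//].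
by move: q_e; rewrite q_p (negbTE p_ne).
Qed.

Section MobiusPair.
Variable R : numFieldType.
Variable k : nat.

(* With k = l these are the terms of the expanded Euler product; with
   k = l - 1 the summands of [S29]. *)
Definition mobius_pair (x y : nat) : R :=
  if coprime x y then (moebius x * moebius y)%:~R / (x * y)%:R ^+ k else 0.

Lemma mobius_pairC x y : mobius_pair x y = mobius_pair y x.
Proof. by rewrite /mobius_pair coprime_sym (mulnC x) (mulrC (moebius x)). Qed.

Lemma mobius_pair_moebius_eq0 x y : moebius x = 0 -> mobius_pair x y = 0.
Proof. by move=> mu_x; rewrite /mobius_pair mu_x !mul0r if_same. Qed.

Lemma mobius_pair_primeM2 p x y : prime p -> mobius_pair (p * x) (p * y) = 0.
Proof. by move=> p_pr; rewrite /mobius_pair coprimeMl coprimeMr prime_coprime ?dvdnn. Qed.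

Lemma mobius_pair_primeMl p x y : prime p -> ~~ (p %| x)%N -> ~~ (p %| y)%N ->
  (0 < x)%N -> mobius_pair (p * x) y = - mobius_pair x y / p%:R ^+ k.
Proof.
move=> p_pr p_nx p_ny x_gt0.
rewrite /mobius_pair coprimeMl prime_coprime // p_ny /=.
case: ifP => _; last by rewrite oppr0 mul0r.
by rewrite moebius_primeM // mulNr rmorphN /= -mulnA natrM exprMn invfM; ring.
Qed.

Lemma sum_subprods_mobius_pair ps : uniq ps -> all prime ps ->
  \sum_(x <- subprods ps) \sum_(y <- subprods ps) mobius_pair x y =
  \prod_(p <- ps) (1 - 2 / p%:R ^+ k).
Proof.
elim: ps => [|p ps IH] /=.
  by rewrite !big_seq1 big_nil /mobius_pair coprime1n moebius1 mulr1 expr1n divr1.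
case/andP=> p_ps ps_uniq /andP[p_pr ps_pr]; rewrite big_cons -IH //.
set D := subprods ps; set c : R := p%:R ^+ k.
have D_ndvd x : x \in D -> ~~ (p %| x)%N by apply: subprods_ndvd.
have D_gt0 x : x \in D -> (0 < x)%N by apply: subprods_gt0.
have pairMl : {in D &, forall x y, mobius_pair (p * x) y = - mobius_pair x y / c}.
  by move=> x y xD yD; rewrite mobius_pair_primeMl ?D_ndvd ?D_gt0.
have row x : x \in D -> \sum_(y <- D ++ map (muln p) D) mobius_pair x y =
    \sum_(y <- D) mobius_pair x y - (\sum_(y <- D) mobius_pair x y) / c.
  move=> xD; rewrite big_cat /= big_map mulr_suml -sumrN; congr (_ + _).
  by apply: eq_big_seq => y yD; rewrite mobius_pairC pairMl // mobius_pairC mulNr.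
have rowM x : x \in D -> \sum_(y <- D ++ map (muln p) D) mobius_pair (p * x) y =
    - (\sum_(y <- D) mobius_pair x y) / c.
  move=> xD; rewrite big_cat /= big_map [X in _ + X]big1 => [|y _]; last first.
    exact: mobius_pair_primeM2.
  by rewrite addr0 mulNr mulr_suml -sumrN; apply: eq_big_seq => y yD; rewrite pairMl // mulNr.
rewrite big_cat /= big_map (eq_big_seq _ row) (eq_big_seq _ rowM) /=.
by rewrite sumrB -!mulr_suml sumrN /c; ring.
Qed.

Lemma norm_mobius_pair_le x y : `|mobius_pair x y| <= ((x * y)%:R ^+ k)^-1.
Proof.
rewrite /mobius_pair; case: ifP => _; last first.
  by rewrite normr0 invr_ge0 exprn_ge0.
rewrite normf_div normrX normr_nat ler_piMl ?invr_ge0 ?exprn_ge0 //.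
by rewrite intrM normrM mulr_ile1 ?norm_moebius_le1.
Qed.
End MobiusPair.

Lemma mobius_pairS (R : numFieldType) k x y :
  mobius_pair R k.+1 x y = mobius_pair R k x y / (x * y)%:R.
Proof.
rewrite /mobius_pair; case: ifP => _; last by rewrite mul0r.
by rewrite exprSr invfM mulrA.
Qed.

Lemma sum_inv_sqr_le (R : realFieldType) K K' : (0 < K)%N ->
  \sum_(K <= x < K') (x%:R ^+ 2)^-1 <= 2 / K%:R :> R.
Proof.
move=> K_gt0; have [KK'|K'K] := leqP K K'; last first.
  by rewrite big_geq ?divr_ge0 // ltnW.
have telescope x : (0 < x)%N -> (x%:R ^+ 2)^-1 <= 2 / x%:R - 2 / x.+1%:R :> R.
  move=> x_gt0; have t_ge1 : 1 <= x%:R :> R by rewrite ler1n.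
  have -> : 2 / x%:R - 2 / x.+1%:R = (x%:R * (x%:R + 1) / 2)^-1 :> R.
    by rewrite -natr1; field; apply/andP; split; apply: lt0r_neq0; lra.
  rewrite lef_pV2 ?posrE ?exprn_gt0 ?divr_gt0 ?mulr_gt0 ?addr_gt0; try lra.
  by rewrite ler_pdivrMr //; nra.
pose f x : R := - (2 / x%:R).
apply: (@le_trans _ _ (\sum_(K <= x < K') (f x.+1 - f x))).
  apply: ler_sum_nat => x /andP[Kx _]; rewrite /f opprK addrC.
  exact/telescope/(leq_trans K_gt0).
by rewrite telescope_sumr // /f opprK addrC gerBl divr_ge0.
Qed.

Lemma dsum_sqr_diff_le (R : realFieldType) (h : nat -> nat -> R) N M :
  (forall x y, (0 < x)%N -> (0 < y)%N ->
     `|h x y| <= (x%:R ^+ 2)^-1 * (y%:R ^+ 2)^-1) ->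
  (0 < N)%N -> (N <= M)%N ->
  `|\sum_(1 <= x < M) \sum_(1 <= y < M) h x y
    - \sum_(1 <= x < N) \sum_(1 <= y < N) h x y| <= 8 / N%:R.
Proof.
move=> h_le N_gt0 NM; pose u x : R := (x%:R ^+ 2)^-1.
have rect a b c d : (0 < a)%N -> (0 < c)%N ->
    `|\sum_(a <= x < b) \sum_(c <= y < d) h x y| <=
    (\sum_(a <= x < b) u x) * (\sum_(c <= y < d) u y).
  move=> a_gt0 c_gt0; rewrite mulr_suml; apply: le_trans (ler_norm_sum _ _ _) _.
  apply: ler_sum_nat => x /andP[ax _]; rewrite mulr_sumr.
  apply: le_trans (ler_norm_sum _ _ _) _; apply: ler_sum_nat => y /andP[cy _].
  exact: h_le (leq_trans a_gt0 ax) (leq_trans c_gt0 cy).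
have u_ge0 a b : 0 <= \sum_(a <= x < b) u x.
  by apply: sumr_ge0 => x _; rewrite invr_ge0 exprn_ge0.
have u_le2 b : \sum_(1 <= x < b) u x <= 2 by rewrite -[2]divr1 sum_inv_sqr_le.
have u_tail : \sum_(N <= x < M) u x <= 2 / N%:R by rewrite sum_inv_sqr_le.
rewrite (big_cat_nat N_gt0 NM) /=.
under eq_bigr do rewrite (big_cat_nat N_gt0 NM) /=.
rewrite big_split /= -addrA addrC addrK; apply: le_trans (ler_normD _ _) _.
have -> : 8 / N%:R = 2 * (2 / N%:R) + 2 / N%:R * 2 :> R.
  by field; rewrite pnatr_eq0 -lt0n.
by apply: lerD; apply: le_trans (rect _ _ _ _ _ _) _; rewrite ?ler_pM.
Qed.

Lemma exists_nat_div_lt (R : archiFieldType) (c e : R) : 0 < e ->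
  exists2 K, (0 < K)%N & c / K%:R < e.
Proof.
move=> e_gt0; exists (Num.truncn (c / e)).+1 => //.
by rewrite ltr_pdivrMr // mulrC -ltr_pdivrMr // truncnS_gt.
Qed.

Lemma cauchy_rate_has_lim (R : realType) (u : nat -> R) c :
  (forall N M, (0 < N)%N -> (N <= M)%N -> `|u M - u N| <= c / N%:R) ->
  exists P, forall N, (0 < N)%N -> `|u N - P| <= c / N%:R.
Proof.
move=> u_rate; have u_cvg : cvg (u @ \oo).
  apply/cauchy_cvgP/cauchy_exP => e e_gt0.
  have [K K_gt0 cK] := exists_nat_div_lt c e_gt0.
  exists (u K), K => // M /= KM; rewrite -ball_normE /ball_ /= distrC.
  exact: le_lt_trans (u_rate K M K_gt0 KM) cK.
exists (lim (u @ \oo)) => N N_gt0; rewrite distrC ler_distl.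
have near_uN : \forall M \near \oo, u N - c / N%:R <= u M <= u N + c / N%:R.
  by exists N => // M /= NM; rewrite -ler_distl u_rate.
by rewrite limr_ge ?limr_le //; apply: filterS near_uN => M /andP[].
Qed.

Lemma cvg_of_rate (R : realType) (u : nat -> R) P c :
  (forall N, (0 < N)%N -> `|u N - P| <= c / N%:R) -> u @ \oo --> P.
Proof.
move=> u_rate; have c_ge0 : 0 <= c by rewrite -[c]divr1 (le_trans _ (u_rate 1%N _)).
apply/cvgrPdist_le => e e_gt0; have [K K_gt0 cK] := exists_nat_div_lt c e_gt0.
exists K => // N /= KN; rewrite distrC; apply: le_trans (u_rate N _) _.
  exact: leq_trans KN.
apply/ltW/le_lt_trans/cK; rewrite ler_wpM2l // lef_pV2 ?posrE ?ltr0n ?ler_nat //.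
exact: leq_trans K_gt0 KN.
Qed.

Lemma ln_le_powR_div (R : realType) (x d : R) : 0 < x -> 0 < d ->
  ln x <= x `^ d / d.
Proof.
move=> x_gt0 d_gt0; rewrite ler_pdivlMr // mulrC -ln_powR.
exact/ltW/ln_sublinear/powR_gt0.
Qed.

Lemma harmonic_sum_le_ln (R : realType) n : (0 < n)%N ->
  \sum_(1 <= k < n.+1) k%:R^-1 <= 1 + ln n%:R :> R.
Proof.
move=> n_gt0; rewrite big_nat_recl // invr1 lerD2l.
have ln_step k : (0 < k)%N -> k.+1%:R^-1 <= ln k.+1%:R - ln k%:R :> R.
  move=> k_gt0; have lt_k : -1 < - k.+1%:R^-1 :> R.
    by rewrite ltrN2 invf_lt1 ?ltr0n // ltr1n ltnS.
  have := le_ln1Dx lt_k.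
  have -> : 1 + - k.+1%:R^-1 = k%:R / k.+1%:R :> R.
    by rewrite -natr1; field; rewrite natr1 pnatr_eq0.
  by rewrite ln_div ?posrE ?ltr0n // -opprB lerN2.
apply: (@le_trans _ _ (\sum_(1 <= k < n) (ln k.+1%:R - ln k%:R))).
  by apply: ler_sum_nat => k /andP[k_gt0 _]; apply: ln_step.
by rewrite telescope_sumr // ln1 subr0.
Qed.

Lemma powR_ge1 (R : realType) (x d : R) : 1 <= x -> 0 <= d -> 1 <= x `^ d.
Proof. by move=> x_ge1 d_ge0; rewrite -(powRr0 x) ler_powR. Qed.

Lemma harmonic_sum_le_powR (R : realType) n (d : R) : (0 < n)%N -> 0 < d ->
  \sum_(1 <= k < n.+1) k%:R^-1 <= (1 + d^-1) * n%:R `^ d.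
Proof.
move=> n_gt0 d_gt0; apply: le_trans (harmonic_sum_le_ln R n_gt0) _.
rewrite mulrDl mul1r lerD //; first by rewrite powR_ge1 ?ler1n ?ltW.
by rewrite mulrC ln_le_powR_div ?ltr0n.
Qed.

Section ResidueCount.
Variables m r : nat.
Hypothesis m_gt0 : (0 < m)%N.
Local Notation in_class := (fun i => i %% m == r %% m)%N.

Lemma count_mod_iota_period a : count in_class (iota a m) = 1%N.
Proof.
elim: a => [|a IH].
  rewrite (@eq_in_count _ _ (pred1 (r %% m)%N)) => [|i]; last first.
    by rewrite mem_iota add0n => /andP[_ i_lt_m]; rewrite /= modn_small.
  by rewrite count_uniq_mem ?iota_uniq // mem_iota ltn_mod m_gt0.
have : count in_class (iota a m.+1) = count in_class (a :: iota a.+1 m) by [].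
rewrite -addn1 iotaD count_cat IH /= addn0 modnDr addnC => /eqP.
by rewrite eqn_add2l eq_sym => /eqP.
Qed.

Lemma count_mod_iota_mul a q : count in_class (iota a (q * m)) = q.
Proof.
by elim: q a => [|q IH] a //; rewrite mulSn iotaD count_cat count_mod_iota_period IH.
Qed.

Lemma count_mod_iota (R : realFieldType) a L :
  `|(count in_class (iota a L))%:R - L%:R / m%:R| <= 1 :> R.
Proof.
rewrite (divn_eq L m); move: (L %/ m)%N (L %% m)%N (ltn_pmod L m_gt0) => q s s_lt_m.
set c := count in_class (iota (a + q * m) s).
have c_le1 : c%:R <= 1 :> R.
  have iota_split : iota (a + q * m) m = iota (a + q * m) s ++ iota (a + q * m + s) (m - s).
    by rewrite -iotaD subnKC // ltnW.
  by rewrite lern1 -(count_mod_iota_period (a + q * m)) iota_split count_cat leq_addr.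
rewrite iotaD count_cat count_mod_iota_mul -/c !natrD natrM mulrDl mulfK; last first.
  by rewrite pnatr_eq0 -lt0n.
rewrite opprD addrACA subrr add0r.
have t_ge0 : 0 <= s%:R / m%:R :> R by rewrite divr_ge0.
have t_le1 : s%:R / m%:R <= 1 :> R by rewrite ler_pdivrMr ?ltr0n // mul1r ler_nat ltnW.
have := lerB (ler0n R c) t_le1; have := lerB c_le1 t_ge0.
by rewrite sub0r subr0 ler_norml => -> ->.
Qed.
End ResidueCount.

Lemma dvdn_dvdnS_chinese x y i : coprime x y -> (0 < y)%N ->
  ((x %| i) && (y %| i.+1) = (i %% (x * y) == chinese x y 0 y.-1 %% (x * y)))%N.
Proof.
move=> co_xy y_gt0; rewrite chinese_remainder // chinese_modl // chinese_modr // mod0n.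
by rewrite -(eqn_modDr 1) !addn1 prednK // modnn.
Qed.

Lemma count_index_iota_geq (P : pred nat) m n : (0 < m)%N ->
  count (fun i => P i && (m <= i)%N) (index_iota 1 n.+1) = count P (iota m (n.+1 - m)).
Proof.
move=> m_gt0; have [m_le|m_gt] := leqP m n.+1; last first.
  rewrite (eqP (ltnW m_gt : n.+1 - m == 0)%N) /=; apply/eqP.
  rewrite -leqn0 leqNgt -has_count; apply/hasPn => i; rewrite mem_index_iota.
  by case/andP=> _ i_le; rewrite (leqNgt m) (ltn_trans i_le m_gt) andbF.
have -> : index_iota 1 n.+1 = iota 1 m.-1 ++ iota m (n.+1 - m).
  have m_eq : m = (1 + m.-1)%N by rewrite add1n prednK.
  by rewrite /index_iota {2}m_eq -iotaD; congr iota; lia.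
rewrite count_cat (@eq_in_count _ _ pred0) ?count_pred0 => [|i]; last first.
  by rewrite mem_iota add1n prednK // => /andP[_ /ltn_geF ->]; rewrite andbF.
by apply: eq_in_count => i; rewrite mem_iota => /andP[-> _]; rewrite andbT.
Qed.

Definition dvdn_succ_count (n x y : nat) : nat :=
  count (fun i => [&& x %| i, y %| i.+1 & x * y <= i])%N (index_iota 1 n.+1).

Lemma dvdn_succ_count_approx (R : realFieldType) n x y : coprime x y ->
  (0 < x)%N -> (0 < y)%N ->
  `|(dvdn_succ_count n x y)%:R - n%:R / (x * y)%:R| <= 2 :> R.
Proof.
move=> co_xy x_gt0 y_gt0; set m := (x * y)%N; set r := chinese x y 0 y.-1.
have m_gt0 : (0 < m)%N by rewrite muln_gt0 x_gt0.
have m_pos : 0 < m%:R :> R by rewrite ltr0n.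
have -> : dvdn_succ_count n x y =
    count (fun i => i %% m == r %% m)%N (iota m (n.+1 - m)).
  rewrite -count_index_iota_geq //; apply: eq_count => i /=.
  by rewrite andbA dvdn_dvdnS_chinese.
have tail : `|(n.+1 - m)%:R / m%:R - n%:R / m%:R| <= 1 :> R.
  rewrite -mulrBl normrM normfV (gtr0_norm m_pos) ler_pdivrMr // mul1r.
  have [m_le|m_gt] := leqP m n.+1.
    have m_ge1 : 1 <= m%:R :> R by rewrite ler1n.
    by rewrite natrB // -natr1 ler_norml; apply/andP; split; lra.
  by rewrite (eqP (ltnW m_gt : n.+1 - m == 0)%N) sub0r normrN normr_nat ler_nat; lia.
apply: le_trans (ler_distD ((n.+1 - m)%:R / m%:R) _ _) _.
by rewrite -[2]/(1 + 1) lerD // count_mod_iota.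
Qed.

Lemma big_nat_cond_cut (R : nmodType) m k k' (P : pred nat) (F : nat -> R) :
  (k <= k')%N -> (forall i, (k <= i)%N -> ~~ P i) ->
  \sum_(m <= i < k' | P i) F i = \sum_(m <= i < k | P i) F i.
Proof.
move=> kk' P_k; rewrite [RHS](big_nat_widen _ _ _ _ _ kk'); apply: eq_bigl => i.
by case: ltnP => [|/P_k/negbTE ->]; rewrite ?andbT ?andbF.
Qed.

Lemma sum_seq_index_iota (R : nmodType) (F : nat -> R) (s : seq nat) a b :
  uniq s -> {subset s <= index_iota a b} ->
  \sum_(x <- s) F x = \sum_(a <= x < b | x \in s) F x.
Proof.
move=> s_uniq s_sub; rewrite -[RHS]big_filter; apply/perm_big/uniq_perm => //.
  by rewrite filter_uniq // iota_uniq.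
by move=> z; rewrite mem_filter; case z_s: (z \in s); rewrite // s_sub.
Qed.

Lemma S29_eq_sum_count (R : realType) k n : S29 R k.+1 n =
  \sum_(1 <= x < n.+1) \sum_(1 <= y < n.+1)
    mobius_pair R k x y * (dvdn_succ_count n x y)%:R.
Proof.
(* The exponent is written [k.+1 - 1] to match [S29 R k.+1] syntactically. *)
pose f x y : R := (moebius x * moebius y)%:~R / ((x * y)%:R ^+ (k.+1 - 1)).
have inner i : (1 <= i < n.+1)%N ->
    \sum_(1 <= x < i.+1 | (x %| i)%N) \sum_(1 <= y < i.+2 |
       [&& y %| i.+1, coprime x y & x * y <= i]%N) f x y =
    \sum_(1 <= x < n.+1) \sum_(1 <= y < n.+1)
       (if [&& x %| i, y %| i.+1 & x * y <= i]%N then mobius_pair R k x y else 0).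
  case/andP=> i_gt0 i_le_n.
  rewrite -(@big_nat_cond_cut _ _ _ n.+1) // => [|x ix]; last first.
    by apply: contraTN ix => /(dvdn_leq i_gt0); rewrite leqNgt.
  rewrite big_mkcond; apply: eq_big_nat => x /andP[x_gt0 _].
  case: (x %| i)%N; last by rewrite big1.
  have y_cut j : (i < j)%N ->
      \sum_(1 <= y < j | [&& y %| i.+1, coprime x y & x * y <= i]%N) f x y =
      \sum_(1 <= y < i.+1 | [&& y %| i.+1, coprime x y & x * y <= i]%N) f x y.
    move=> ij; apply: big_nat_cond_cut => // y iy; rewrite !negb_and -ltnNge.
    by rewrite (leq_trans iy) ?orbT // leq_pmull.
  rewrite y_cut // -(y_cut n.+1) // big_mkcond; apply: eq_bigr => y _.
  by rewrite /mobius_pair /f subn1; case: (y %| i.+1)%N; case: coprime; case: (x * y <= i)%N.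
rewrite /S29 (eq_big_nat _ _ inner) exchange_big; apply: eq_big_nat => x _.
rewrite exchange_big; apply: eq_big_nat => y _.
by rewrite -big_mkcond big_const_seq iter_addr_0 mulr_natr.
Qed.

Section MobiusPairSum.
Variable R : realType.
Variable l : nat.
Hypothesis l_ge2 : (2 <= l)%N.

Definition mobius_pair_sum (K : nat) : R :=
  \sum_(1 <= x < K) \sum_(1 <= y < K) mobius_pair R l x y.

Lemma norm_mobius_pair_le_sqr x y : (0 < x)%N -> (0 < y)%N ->
  `|mobius_pair R l x y| <= (x%:R ^+ 2)^-1 * (y%:R ^+ 2)^-1.
Proof.
move=> x_gt0 y_gt0; apply: le_trans (norm_mobius_pair_le R _ x y) _.
rewrite -invfM -exprMn -natrM lef_pV2 ?posrE ?exprn_gt0 ?ltr0n ?muln_gt0 ?x_gt0 //.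
by rewrite ler_weXn2l // ler1n muln_gt0 x_gt0.
Qed.

Lemma mobius_pair_sum_cauchy N M : (0 < N)%N -> (N <= M)%N ->
  `|mobius_pair_sum M - mobius_pair_sum N| <= 8 / N%:R.
Proof. exact/dsum_sqr_diff_le/norm_mobius_pair_le_sqr. Qed.

Lemma euler_partial_near_mobius_pair_sum N : (0 < N)%N ->
  `|euler_partial R l N - mobius_pair_sum N| <= 8 / N%:R.
Proof.
move=> N_gt0; set ps := [seq p <- iota 0 N | prime p]; set D := subprods ps.
have ps_uniq : uniq ps by rewrite filter_uniq // iota_uniq.
have ps_prime : all prime ps by apply/allP => p; rewrite mem_filter => /andP[].
set M := maxn N (\max_(x <- D) x).+1.
have D_sub : {subset D <= index_iota 1 M}.
  move=> x xD; rewrite mem_index_iota (subprods_gt0 ps_prime xD) leq_max ltnS.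
  by apply/orP; right; apply: leq_bigmax_seq.
pose h x y := if (x \in D) && (y \in D) then mobius_pair R l x y else 0.
have -> : euler_partial R l N = \sum_(1 <= x < M) \sum_(1 <= y < M) h x y.
  have -> : euler_partial R l N = \sum_(x <- D) \sum_(y <- D) mobius_pair R l x y.
    rewrite sum_subprods_mobius_pair // big_filter.
    by rewrite (_ : iota 0 N = index_iota 0 N) ?big_mkord // /index_iota subn0.
  rewrite (sum_seq_index_iota _ _ D_sub) ?subprods_uniq //.
  rewrite big_mkcond; apply: eq_bigr => x _; rewrite /h; case: (x \in D) => /=.
    by rewrite (sum_seq_index_iota _ _ D_sub) ?subprods_uniq // big_mkcond.
  by rewrite big1.
have moebius_out z : (0 < z)%N -> (z < N)%N -> z \notin D -> moebius z = 0.
  move=> z_gt0 z_lt_N; apply: contraNeq => mu_z; apply: mem_subprods => // q.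
  rewrite mem_primes mem_filter => /and3P[q_pr _ q_z]; rewrite q_pr mem_iota /=.
  exact: leq_ltn_trans (dvdn_leq z_gt0 q_z) z_lt_N.
have -> : mobius_pair_sum N = \sum_(1 <= x < N) \sum_(1 <= y < N) h x y.
  apply: eq_big_nat => x /andP[x_gt0 x_lt_N]; apply: eq_big_nat => y /andP[y_gt0 y_lt_N].
  rewrite /h; case xD: (x \in D); last by rewrite mobius_pair_moebius_eq0 // moebius_out ?xD.
  case yD: (y \in D) => //.
  by rewrite mobius_pairC mobius_pair_moebius_eq0 // moebius_out ?yD.
apply: dsum_sqr_diff_le => // [x y x_gt0 y_gt0|]; last first.
  by rewrite leq_maxl.
rewrite /h; case: ifP => _; first exact: norm_mobius_pair_le_sqr.
by rewrite normr0 mulr_ge0 ?invr_ge0 ?exprn_ge0.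
Qed.

Lemma euler_partial_cvg : exists P,
  (euler_partial R l @ \oo --> P) /\
  forall K, (0 < K)%N -> `|mobius_pair_sum K - P| <= 8 / K%:R.
Proof.
have [P sum_near] := cauchy_rate_has_lim mobius_pair_sum_cauchy.
exists P; split => //; apply: (@cvg_of_rate _ _ _ 16) => N N_gt0.
apply: le_trans (ler_distD (mobius_pair_sum N) _ _) _.
have -> : 16 / N%:R = 8 / N%:R + 8 / N%:R :> R by rewrite -mulrDl; congr (_ / _); lra.
by rewrite lerD ?euler_partial_near_mobius_pair_sum ?sum_near.
Qed.
End MobiusPairSum.

Lemma norm_mobius_pair_count_sub_le (R : realFieldType) k n x y :
  (0 < k)%N -> (0 < x)%N -> (0 < y)%N ->
  `|mobius_pair R k x y * (dvdn_succ_count n x y)%:R - n%:R * mobius_pair R k.+1 x y|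
    <= 2 * (x%:R^-1 * y%:R^-1).
Proof.
move=> k_gt0 x_gt0 y_gt0; have xy_ge1 : 1 <= (x * y)%:R :> R by rewrite ler1n muln_gt0 x_gt0.
case co_xy: (coprime x y); last first.
  by rewrite /mobius_pair co_xy mul0r mulr0 subr0 normr0 mulr_ge0 ?mulr_ge0 ?invr_ge0.
rewrite mobius_pairS mulrCA -mulrBr normrM mulrC ler_pM //.
  exact: dvdn_succ_count_approx.
apply: le_trans (norm_mobius_pair_le R _ x y) _.
rewrite -invfM -natrM lef_pV2 ?posrE ?exprn_gt0 ?(lt_le_trans ltr01) //.
by rewrite -[leLHS]expr1 ler_weXn2l.
Qed.

Lemma norm_S29_sub_le (R : realType) k n : (0 < k)%N ->
  `|S29 R k.+1 n - n%:R * mobius_pair_sum R k.+1 n.+1| <=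
  2 * (\sum_(1 <= j < n.+1) j%:R^-1) ^+ 2.
Proof.
move=> k_gt0; rewrite S29_eq_sum_count /mobius_pair_sum mulr_sumr.
under [X in _ - X]eq_bigr do rewrite mulr_sumr.
rewrite -sumrB; under eq_bigr do rewrite -sumrB.
rewrite expr2 mulr_suml mulr_sumr; apply: le_trans (ler_norm_sum _ _ _) _.
apply: ler_sum_nat => x /andP[x_gt0 _]; rewrite mulr_sumr mulr_sumr.
apply: le_trans (ler_norm_sum _ _ _) _; apply: ler_sum_nat => y /andP[y_gt0 _].
exact: norm_mobius_pair_count_sub_le.
Qed.

Theorem lemma2p9 (R : realType) (l : nat) (eps : R) :
  (2 <= l)%N -> 0 < eps ->
  exists P : R,
    ((fun N : nat => euler_partial R l N) @ \oo --> P) /\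
    exists C : R, exists N0 : nat, forall n : nat, (N0 <= n)%N ->
      `| S29 R l n - n%:R * P | <= C * (n%:R `^ eps).
Proof.
case: l => // k k_gt0 eps_gt0; have [P [euler_cvg sum_near]] := euler_partial_cvg R k_gt0.
exists P; split => //.
set d := eps / 2; have d_gt0 : 0 < d by rewrite divr_gt0.
exists (2 * (1 + d^-1) ^+ 2 + 8), 1%N => n n_gt0.
set T := mobius_pair_sum R k.+1 n.+1.
have -> : S29 R k.+1 n - n%:R * P = (S29 R k.+1 n - n%:R * T) + n%:R * (T - P) by ring.
apply: le_trans (ler_normD _ _) _; rewrite mulrDl lerD //.
  apply: le_trans (norm_S29_sub_le _ _ k_gt0) _; rewrite -mulrA ler_wpM2l //.
  have H_ge0 : 0 <= \sum_(1 <= j < n.+1) j%:R^-1 :> R.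
    by rewrite sumr_ge0 // => j _; rewrite invr_ge0.
  have H_le := harmonic_sum_le_powR n_gt0 d_gt0.
  have pow_split : n%:R `^ eps = n%:R `^ d * n%:R `^ d.
    by rewrite -powRD ?pnatr_eq0 -?lt0n ?n_gt0 ?implybT // -splitr.
  by rewrite expr2 pow_split -mulrACA -expr2 ler_pM.
rewrite normrM ger0_norm ?ler0n // mulrC -ler_pdivlMr ?ltr0n //.
apply: le_trans (sum_near n.+1 isT) _; rewrite -mulrA ler_wpM2l //.
apply: (@le_trans _ _ n%:R^-1); first by rewrite lef_pV2 ?posrE ?ltr0n // ler_nat.
by rewrite ler_peMl ?invr_ge0 // powR_ge1 ?ler1n // ltW.
Qed.
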